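(* Suppose there is a function $f:\mathbb{N}\times\mathbb{N}\times\mathbb{R}_{>0}\to\mathbb{R}_{\ge0}$ such that, for all $n,T\in\mathbb{N}$, $\varepsilon>0$ and every IIK instance with $n$ items and $T$ times, one can compute in time $f(n,T,\varepsilon)$ a feasible solution whose profit is at least $(1-\varepsilon)$ times the maximum profit of a 1-in feasible solution. Then for every IIK instance with $n$ items and $T$ times one can compute a feasible solution of profit at least $(1-\varepsilon)$ times the optimum in time $O(n)\cdot f(n,T,\varepsilon)$.
   Context: An IIK instance consists of items $[n]$ with profits $p_i>0$ and weights $w_i>0$, a number $T$ of times and capacities $0<b_1\le\dots\le b_T$. A feasible solution is $x=(x_1,\dots,x_T)$ with $x_t\in\{0,1\}^n$, $w^Tx_t\le b_t$ for $t\in[T]$ and $x_t\le x_{t+1}$ componentwise for $t\in[T-1]$; its profit is $\sum_{t\in[T]}p^Tx_t$. A feasible solution is called 1-in if $x_{T,i}=1$ for some item $i$ of maximum profit, i.e. with $p_i=\max_{j\in[n]}p_j$ (so an item of highest profit is inserted at some time). *)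

From Stdlib Require Import Reals List.
Import ListNotations.
Open Scope R_scope.

(** * IIK instances (0-indexed: items 0..n-1, times 0..T-1) *)
Record instance := Inst {
  n_items : nat;
  n_times : nat;
  prof : nat -> R;
  wgt  : nat -> R;
  cap  : nat -> R    (* b_t, relevant for t < T (b_{t+1} in 1-indexed notation) *)
}.

Definition valid (I : instance) : Prop :=
  (forall i, (i < n_items I)%nat -> 0 < prof I i) /\
  (forall i, (i < n_items I)%nat -> 0 < wgt I i) /\
  (forall t, (t < n_times I)%nat -> 0 < cap I t) /\
  (forall t, (S t < n_times I)%nat -> cap I t <= cap I (S t)).

(** A solution: [x t i = true] iff item i is in the knapsack at time t. *)
Definition solution := nat -> nat -> bool.

Definition sumR (n : nat) (g : nat -> R) : R :=
  fold_right Rplus 0 (map g (seq 0 n)).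

Definition b2R (b : bool) : R := if b then 1 else 0.

Definition feasible (I : instance) (x : solution) : Prop :=
  (forall t, (t < n_times I)%nat ->
     sumR (n_items I) (fun i => wgt I i * b2R (x t i)) <= cap I t) /\
  (forall t i, (S t < n_times I)%nat -> (i < n_items I)%nat ->
     x t i = true -> x (S t) i = true).

Definition profit (I : instance) (x : solution) : R :=
  sumR (n_times I) (fun t => sumR (n_items I) (fun i => prof I i * b2R (x t i))).

Definition one_in (I : instance) (x : solution) : Prop :=
  (0 < n_times I)%nat /\
  exists i, (i < n_items I)%nat /\ x (pred (n_times I)) i = true /\
    (forall j, (j < n_items I)%nat -> prof I j <= prof I i).

(** * Model of computation: a real-RAM register machine.
    Real values live in registers (indexed by nat) and are never exposed to
    the program; the control flow may only branch on comparisons.  Every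
    instruction costs 1; halting with an output costs n*T (writing the
    n*T output bits).  An algorithm may depend (for free) on n and T. *)
Inductive aop := AAdd | ASub | AMul | ADiv.

Definition aop_sem (o : aop) (a b : R) : R :=
  match o with AAdd => a + b | ASub => a - b | AMul => a * b | ADiv => a / b end.

Inductive prog :=
| Halt    (x : solution)
| LoadP   (i r : nat) (k : prog)
| LoadW   (i r : nat) (k : prog)
| LoadB   (t r : nat) (k : prog)
| LoadEps (r : nat) (k : prog)
| LoadNat (q r : nat) (k : prog)
| Arith   (o : aop) (d a b : nat) (k : prog)
| Test    (a b : nat) (k : bool -> prog).

Definition algo := nat -> nat -> prog.

Definition upd (m : nat -> R) (r : nat) (v : R) : nat -> R :=
  fun j => if Nat.eqb j r then v else m j.

Fixpoint run (I : instance) (eps : R) (P : prog) (m : nat -> R)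
  : solution * nat :=
  match P with
  | Halt x => (x, (n_items I * n_times I)%nat)
  | LoadP i r k => let '(x, c) := run I eps k (upd m r (prof I i)) in (x, S c)
  | LoadW i r k => let '(x, c) := run I eps k (upd m r (wgt I i)) in (x, S c)
  | LoadB t r k => let '(x, c) := run I eps k (upd m r (cap I t)) in (x, S c)
  | LoadEps r k => let '(x, c) := run I eps k (upd m r eps) in (x, S c)
  | LoadNat q r k => let '(x, c) := run I eps k (upd m r (INR q)) in (x, S c)
  | Arith o d a b k =>
      let '(x, c) := run I eps k (upd m d (aop_sem o (m a) (m b))) in (x, S c)
  | Test a b k =>
      let '(x, c) := run I eps (k (if Rle_dec (m a) (m b) then true else false)) m
      in (x, S c)
  end.

Definition exec (A : algo) (I : instance) (eps : R) : solution * nat :=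
  run I eps (A (n_items I) (n_times I)) (fun _ => 0).

From Stdlib Require Import Reals Lra Lia List.
Open Scope R_scope.

(* Let y be an optimal solution.  If y packs nothing at the last time it packs
   nothing at all.  Otherwise let k be its most profitable item present at the
   last time: on the instance where every item more profitable than k is made
   unusable and less profitable than k, y is a 1-in solution with the same
   profit, while every solution there is a solution of the original instance of
   no larger profit.  So running the given algorithm on these n pruned
   instances and keeping the most profitable output is a (1 - eps)-approximation.
   On the register machine the n runs are simulated one after the other on
   disjoint registers; each read of a pruned profit or weight costs a comparison
   and a few extra instructions, and computing and comparing profits costs
   O(n T), which the output size n T of every run already pays for. *)

Lemma sumR_le n g h :
  (forall i, (i < n)%nat -> g i <= h i) -> sumR n g <= sumR n h.
Proof.
  unfold sumR; intro Hgh.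
  assert (Hin : forall i, In i (seq 0 n) -> g i <= h i)
    by (intros i Hi; apply in_seq in Hi; apply Hgh; lia).
  induction (seq 0 n) as [|a l IH]; cbn; [lra|].
  assert (g a <= h a) by (apply Hin; now left).
  assert (fold_right Rplus 0 (map g l) <= fold_right Rplus 0 (map h l))
    by (apply IH; intros; apply Hin; now right).
  lra.
Qed.

Lemma sumR_ext n g h : (forall i, (i < n)%nat -> g i = h i) -> sumR n g = sumR n h.
Proof.
  intro Hgh; unfold sumR; f_equal; apply map_ext_in.
  intros i Hi; apply in_seq in Hi; apply Hgh; lia.
Qed.

Lemma sumR_0 n g : (forall i, (i < n)%nat -> g i = 0) -> sumR n g = 0.
Proof.
  intro Hg; rewrite (sumR_ext n g (fun _ => 0)) by exact Hg.
  unfold sumR; induction (seq 0 n) as [|a l IH]; cbn; [|rewrite IH]; lra.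
Qed.

Lemma sumR_ge0 n g : (forall i, (i < n)%nat -> 0 <= g i) -> 0 <= sumR n g.
Proof. intro Hg; rewrite <- (sumR_0 n (fun _ => 0)) by auto; now apply sumR_le. Qed.

Lemma b2R_bounds b : 0 <= b2R b <= 1.
Proof. destruct b; cbn; lra. Qed.

Definition empty : solution := fun _ _ => false.

Lemma profit_ge0 I x : valid I -> 0 <= profit I x.
Proof.
  intros [Hp _].
  apply sumR_ge0; intros t _; apply sumR_ge0; intros i Hi.
  pose proof (Hp i Hi); pose proof (b2R_bounds (x t i)); nra.
Qed.

Lemma profit_empty I : profit I empty = 0.
Proof. apply sumR_0; intros t _; apply sumR_0; intros i _; cbn; ring. Qed.

Lemma feasible_empty I : valid I -> feasible I empty.
Proof.
  intros (_ & _ & Hc & _); split; [|discriminate].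
  intros t Ht; rewrite sumR_0 by (intros; cbn; ring); now apply Rlt_le, Hc.
Qed.

Lemma feasible_keeps_to_end I y t i : feasible I y ->
  (t < n_times I)%nat -> (i < n_items I)%nat ->
  y t i = true -> y (pred (n_times I)) i = true.
Proof.
  intros [_ Hmono] Ht Hi Hy.
  assert (Hd : forall d, (t + d < n_times I)%nat -> y (t + d)%nat i = true).
  { induction d as [|d IH]; intro Hd; [now rewrite Nat.add_0_r|].
    rewrite Nat.add_succ_r; apply Hmono; [lia | exact Hi | apply IH; lia]. }
  replace (pred (n_times I)) with (t + (pred (n_times I) - t))%nat by lia.
  apply Hd; lia.
Qed.

Lemma max_item_or_none (P : nat -> bool) (p : nat -> R) n :
  (forall i, (i < n)%nat -> P i = false) \/
  exists k, (k < n)%nat /\ P k = true /\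
    forall j, (j < n)%nat -> P j = true -> p j <= p k.
Proof.
  induction n as [|n [Hnone | (k & Hk & HPk & Hmax)]].
  - left; intros; lia.
  - destruct (P n) eqn:HPn.
    + right; exists n; repeat split; auto.
      intros j Hj HPj; destruct (Nat.eq_dec j n) as [->|]; [lra|].
      rewrite Hnone in HPj by lia; discriminate.
    + left; intros i Hi; destruct (Nat.eq_dec i n) as [->|]; auto; apply Hnone; lia.
  - right; destruct (P n) eqn:HPn; [destruct (Rle_dec (p n) (p k))|].
    + exists k; repeat split; auto.
      intros j Hj HPj; destruct (Nat.eq_dec j n) as [->|]; auto; apply Hmax; auto; lia.
    + exists n; repeat split; auto.
      intros j Hj HPj; destruct (Nat.eq_dec j n) as [->|]; [lra|].
      specialize (Hmax j ltac:(lia) HPj); lra.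
    + exists k; repeat split; auto.
      intros j Hj HPj; destruct (Nat.eq_dec j n) as [->|]; [congruence|]; apply Hmax; auto; lia.
Qed.

(* Items cannot be deleted, so the items more profitable than [k] are made heavier
   than the last capacity; their profit drops to [p_k / 2] so that [k] becomes an
   item of maximum profit. *)
Definition prune (I : instance) (k : nat) : instance :=
  Inst (n_items I) (n_times I)
    (fun j => if Rle_dec (prof I j) (prof I k) then prof I j else prof I k / 2)
    (fun j => if Rle_dec (prof I j) (prof I k) then wgt I j
              else cap I (pred (n_times I)) + wgt I j)
    (cap I).

Lemma last_cap_pos I : valid I -> (0 < n_times I)%nat -> 0 < cap I (pred (n_times I)).
Proof. intros (_ & _ & Hc & _) T_pos; apply Hc; lia. Qed.

Section Prune.
Variables (I : instance) (k : nat).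
Hypothesis V : valid I.
Hypothesis T_pos : (0 < n_times I)%nat.
Hypothesis k_lt : (k < n_items I)%nat.

Lemma prune_valid : valid (prune I k).
Proof.
  pose proof (last_cap_pos I V T_pos); destruct V as (Hp & Hw & Hc & Hmono); pose proof (Hp k k_lt).
  repeat split; cbn; auto; intros i Hi;
    destruct (Rle_dec (prof I i) (prof I k)); auto.
  - lra.
  - specialize (Hw i Hi); lra.
Qed.

Lemma feasible_of_prune x : feasible (prune I k) x -> feasible I x.
Proof.
  pose proof (last_cap_pos I V T_pos); intros [Hcap Hmono]; split; auto.
  intros t Ht; eapply Rle_trans; [|exact (Hcap t Ht)].
  apply sumR_le; intros i Hi; cbn.
  pose proof (b2R_bounds (x t i)).
  destruct (Rle_dec (prof I i) (prof I k)); nra.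
Qed.

Lemma profit_prune_le x : profit (prune I k) x <= profit I x.
Proof.
  destruct V as [Hp _]; pose proof (Hp k k_lt).
  apply sumR_le; intros t _; apply sumR_le; intros i _; cbn.
  pose proof (b2R_bounds (x t i)).
  destruct (Rle_dec (prof I i) (prof I k)); nra.
Qed.

Lemma prune_keeps_solution y : feasible I y ->
  y (pred (n_times I)) k = true ->
  (forall j, (j < n_items I)%nat -> y (pred (n_times I)) j = true -> prof I j <= prof I k) ->
  feasible (prune I k) y /\ one_in (prune I k) y /\ profit (prune I k) y = profit I y.
Proof.
  intros Fy Hyk Hmax; destruct V as [Hp _]; pose proof (Hp k k_lt).
  assert (Hused : forall t i, (t < n_times I)%nat -> (i < n_items I)%nat ->
      y t i = true -> prof I i <= prof I k)
    by (intros t i Ht Hi Hy; apply Hmax; auto; eapply feasible_keeps_to_end; eauto).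
  assert (Hsame : forall (a b : R) t i, (t < n_times I)%nat -> (i < n_items I)%nat ->
      (if Rle_dec (prof I i) (prof I k) then a else b) * b2R (y t i) = a * b2R (y t i)).
  { intros a b t i Ht Hi; destruct (y t i) eqn:Hy; [|cbn; ring].
    destruct (Rle_dec (prof I i) (prof I k)); auto.
    exfalso; eauto. }
  split; [|split].
  - destruct Fy as [Hcap Hmono]; split; auto.
    intros t Ht; cbn; rewrite <- (Hcap t Ht); apply Req_le, sumR_ext; intros i Hi.
    now apply Hsame.
  - split; auto; exists k; cbn; repeat split; auto.
    intros j _; destruct (Rle_dec (prof I k) (prof I k)); [|lra].
    destruct (Rle_dec (prof I j) (prof I k)); lra.
  - apply sumR_ext; intros t Ht; apply sumR_ext; intros i Hi; now apply Hsame.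
Qed.

End Prune.

Lemma approx_by_best_guess (I : instance) (eps B : R) (g : nat -> solution) :
  valid I -> (0 < n_times I)%nat -> 0 <= B ->
  (forall k, (k < n_items I)%nat -> forall z,
     feasible (prune I k) z -> one_in (prune I k) z ->
     (1 - eps) * profit (prune I k) z <= profit (prune I k) (g k)) ->
  (forall k, (k < n_items I)%nat -> profit I (g k) <= B) ->
  forall y, feasible I y -> (1 - eps) * profit I y <= B.
Proof.
  intros V T_pos B_ge0 Happrox HB y Fy.
  destruct (max_item_or_none (y (pred (n_times I))) (prof I) (n_items I))
    as [Hnone | (k & Hk & Hyk & Hmax)].
  - assert (Hzero : profit I y = 0).
    { apply sumR_0; intros t Ht; apply sumR_0; intros i Hi.
      destruct (y t i) eqn:Hy; [|cbn; ring].
      assert (Hend := feasible_keeps_to_end I y t i Fy Ht Hi Hy).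
      now rewrite Hnone in Hend. }
    rewrite Hzero, Rmult_0_r; exact B_ge0.
  - destruct (prune_keeps_solution I k V T_pos Hk y Fy Hyk Hmax) as (Fp & Op & Ep).
    rewrite <- Ep.
    eapply Rle_trans; [now apply Happrox|].
    eapply Rle_trans; [apply profit_prune_le|]; auto.
Qed.

Definition delay (c : nat) (o : solution * nat) : solution * nat := (fst o, c + snd o)%nat.

Lemma delay_delay a b o : delay a (delay b o) = delay (a + b) o.
Proof. unfold delay; cbn; f_equal; lia. Qed.

Lemma upd_same m r v : upd m r v r = v.
Proof. unfold upd; now rewrite Nat.eqb_refl. Qed.

Lemma upd_other m r v j : j <> r -> upd m r v j = m j.
Proof. intro Hjr; unfold upd; now rewrite (proj2 (Nat.eqb_neq j r) Hjr). Qed.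

Section Run.
Variables (I : instance) (eps : R) (m : nat -> R).

Lemma run_Halt x : run I eps (Halt x) m = (x, n_items I * n_times I)%nat.
Proof. reflexivity. Qed.

Lemma run_LoadP i r P : run I eps (LoadP i r P) m = delay 1 (run I eps P (upd m r (prof I i))).
Proof. cbn; now destruct run. Qed.

Lemma run_LoadW i r P : run I eps (LoadW i r P) m = delay 1 (run I eps P (upd m r (wgt I i))).
Proof. cbn; now destruct run. Qed.

Lemma run_LoadB t r P : run I eps (LoadB t r P) m = delay 1 (run I eps P (upd m r (cap I t))).
Proof. cbn; now destruct run. Qed.

Lemma run_LoadEps r P : run I eps (LoadEps r P) m = delay 1 (run I eps P (upd m r eps)).
Proof. cbn; now destruct run. Qed.

Lemma run_LoadNat q r P : run I eps (LoadNat q r P) m = delay 1 (run I eps P (upd m r (INR q))).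
Proof. cbn; now destruct run. Qed.

Lemma run_Arith o d a b P :
  run I eps (Arith o d a b P) m = delay 1 (run I eps P (upd m d (aop_sem o (m a) (m b)))).
Proof. cbn; now destruct run. Qed.

Lemma run_Test a b k :
  run I eps (Test a b k) m = delay 1 (run I eps (k (if Rle_dec (m a) (m b) then true else false)) m).
Proof. cbn; now destruct run. Qed.

End Run.

Lemma run_cost_ge I eps P m : (n_items I * n_times I <= snd (run I eps P m))%nat.
Proof.
  revert m; induction P; intro m;
    rewrite ?run_LoadP, ?run_LoadW, ?run_LoadB, ?run_LoadEps, ?run_LoadNat, ?run_Arith,
      ?run_Test; cbn [delay snd]; auto.
  all: match goal with IH : forall _ : nat -> R, _ |- context [run _ _ _ ?mm] =>
         specialize (IH mm); lia
       | IH : forall _ : bool, forall _ : nat -> R, _ |- context [run _ _ (?k ?b) ?mm] =>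
         specialize (IH b mm); lia end.
Qed.

(* Register layout of the reduction: 0-3 are scratch registers of [simulate],
   4 holds the profit of the best solution found so far, 5-7 serve
   [keep_better], and register [r] of the run of [A] on guess [k] lives in
   register [guess_reg n k r >= 8]. *)
Fixpoint simulate (sh : nat -> nat) (k T : nat) (P : prog) (K : solution -> prog) : prog :=
  match P with
  | Halt x => K x
  | LoadP i r P' => LoadP i 0 (LoadP k 1 (Test 0 1 (fun le => if le
        then LoadP i (sh r) (simulate sh k T P' K)
        else LoadNat 2 2 (Arith ADiv (sh r) 1 2 (simulate sh k T P' K)))))
  | LoadW i r P' => LoadP i 0 (LoadP k 1 (Test 0 1 (fun le => if le
        then LoadW i (sh r) (simulate sh k T P' K)
        else LoadB (pred T) 2 (LoadW i 3 (Arith AAdd (sh r) 2 3 (simulate sh k T P' K))))))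
  | LoadB t r P' => LoadB t (sh r) (simulate sh k T P' K)
  | LoadEps r P' => LoadEps (sh r) (simulate sh k T P' K)
  | LoadNat q r P' => LoadNat q (sh r) (simulate sh k T P' K)
  | Arith o d a b P' => Arith o (sh d) (sh a) (sh b) (simulate sh k T P' K)
  | Test a b kk => Test (sh a) (sh b) (fun le => simulate sh k T (kk le) K)
  end.

Section Simulation.
Variables (I : instance) (eps : R) (k : nat) (sh : nat -> nat) (K : solution -> prog).
Hypothesis sh_inj : forall r r', sh r = sh r' -> r = r'.
Hypothesis sh_high : forall r, (4 <= sh r)%nat.

Let frame (m m' : nat -> R) := forall j, (4 <= j)%nat -> (forall r, j <> sh r) -> m' j = m j.
Let corr (m mA : nat -> R) := forall r, m (sh r) = mA r.
Let sim P := simulate sh k (n_times I) P K.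
Let simulates P mA m := exists m' c, frame m m' /\
  run I eps (sim P) m = delay c (run I eps (K (fst (run (prune I k) eps P mA))) m') /\
  (c + n_items I * n_times I <= 6 * snd (run (prune I k) eps P mA))%nat.

Let corr_upd m mA r v : corr m mA -> corr (upd m (sh r) v) (upd mA r v).
Proof.
  intros Hc r'; unfold upd; destruct (Nat.eqb r' r) eqn:E.
  - apply Nat.eqb_eq in E as ->; now rewrite Nat.eqb_refl.
  - destruct (Nat.eqb (sh r') (sh r)) eqn:E'; auto.
    apply Nat.eqb_eq, sh_inj, Nat.eqb_eq in E'; congruence.
Qed.

Let corr_scratch m mA j v : (j < 4)%nat -> corr m mA -> corr (upd m j v) mA.
Proof. intros Hj Hc r; rewrite upd_other; auto; specialize (sh_high r); lia. Qed.

Let simulates_step Q P m m1 mA mA1 c0 :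
  run I eps (sim Q) m = delay c0 (run I eps (sim P) m1) -> (c0 <= 6)%nat ->
  run (prune I k) eps Q mA = delay 1 (run (prune I k) eps P mA1) ->
  frame m m1 -> simulates P mA1 m1 -> simulates Q mA m.
Proof.
  intros HQ Hc0 HA Hf1 (m' & c & Hf & Hrun & Hcost).
  exists m', (c0 + c)%nat; repeat split.
  - intros j Hj Hsh; rewrite Hf, Hf1; auto.
  - now rewrite HQ, Hrun, HA, delay_delay.
  - rewrite HA; cbn; lia.
Qed.

Ltac run_steps := unfold sim; cbn [simulate];
  repeat (rewrite ?run_LoadP, ?run_LoadW, ?run_LoadB, ?run_LoadEps, ?run_LoadNat, ?run_Arith,
    ?run_Test, ?delay_delay; cbn [upd Nat.eqb aop_sem prof wgt cap prune];
    try (destruct Rle_dec; try contradiction)).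

Ltac frame_upds := intros j Hj Hsh;
  repeat match goal with m := _ |- _ => subst m end; rewrite ?upd_other; auto; lia.

Ltac corr_upds Hc := repeat (apply corr_upd || (apply corr_scratch; [lia|])); exact Hc.

Lemma simulate_run P m mA : (forall r, m (sh r) = mA r) ->
  exists m' c, (forall j, (4 <= j)%nat -> (forall r, j <> sh r) -> m' j = m j) /\
    run I eps (simulate sh k (n_times I) P K) m =
      delay c (run I eps (K (fst (run (prune I k) eps P mA))) m') /\
    (c + n_items I * n_times I <= 6 * snd (run (prune I k) eps P mA))%nat.
Proof.
  change (corr m mA -> simulates P mA m).
  revert m mA; induction P as [x|i r P IH|i r P IH|t r P IH|r P IH|q r P IH|o d a b P IH|a b kk IH];
    intros m mA Hc.
  - exists m, 0%nat; repeat split; auto.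
    + cbn; unfold delay; now destruct run.
    + cbn; lia.
  - set (m0 := upd (upd m 0 (prof I i)) 1 (prof I k)).
    destruct (Rle_dec (prof I i) (prof I k)) as [le|gt].
    + apply (simulates_step _ P m (upd m0 (sh r) (prof I i)) mA (upd mA r (prof I i)) 4);
        [run_steps; reflexivity | lia | now run_steps | frame_upds | apply IH; corr_upds Hc].
    + apply (simulates_step _ P m (upd (upd m0 2 (INR 2)) (sh r) (prof I k / 2)) mA
        (upd mA r (prof I k / 2)) 5).
      * run_steps; replace (INR 2) with 2 by (cbn; ring); reflexivity.
      * lia.
      * now run_steps.
      * frame_upds.
      * apply IH; corr_upds Hc.
  - set (m0 := upd (upd m 0 (prof I i)) 1 (prof I k)).
    destruct (Rle_dec (prof I i) (prof I k)) as [le|gt].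
    + apply (simulates_step _ P m (upd m0 (sh r) (wgt I i)) mA (upd mA r (wgt I i)) 4);
        [run_steps; reflexivity | lia | now run_steps | frame_upds | apply IH; corr_upds Hc].
    + set (w := cap I (pred (n_times I)) + wgt I i).
      apply (simulates_step _ P m
        (upd (upd (upd m0 2 (cap I (pred (n_times I)))) 3 (wgt I i)) (sh r) w) mA (upd mA r w) 6);
        [run_steps; reflexivity | lia | now run_steps | frame_upds | apply IH; corr_upds Hc].
  - apply (simulates_step _ P m (upd m (sh r) (cap I t)) mA (upd mA r (cap I t)) 1);
      [run_steps; reflexivity | lia | now run_steps | frame_upds | apply IH; corr_upds Hc].
  - apply (simulates_step _ P m (upd m (sh r) eps) mA (upd mA r eps) 1);
      [run_steps; reflexivity | lia | now run_steps | frame_upds | apply IH; corr_upds Hc].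
  - apply (simulates_step _ P m (upd m (sh r) (INR q)) mA (upd mA r (INR q)) 1);
      [run_steps; reflexivity | lia | now run_steps | frame_upds | apply IH; corr_upds Hc].
  - set (v := aop_sem o (mA a) (mA b)).
    apply (simulates_step _ P m (upd m (sh d) v) mA (upd mA d v) 1);
      [run_steps; now rewrite !Hc | lia | now run_steps | frame_upds | apply IH; corr_upds Hc].
  - set (le := if Rle_dec (mA a) (mA b) then true else false).
    apply (simulates_step _ (kk le) m m mA mA 1);
      [unfold sim; cbn [simulate]; now rewrite run_Test, !Hc | lia | apply run_Test
      | intros j _ _; reflexivity | now apply IH].
Qed.
End Simulation.

Fixpoint foreach {A : Type} (l : list A) (body : A -> prog -> prog) (K : prog) : prog :=
  match l with
  | nil => K
  | a :: l' => body a (foreach l' body K)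
  end.

Definition add_profit (x : solution) (t i : nat) (K : prog) : prog :=
  if x t i then LoadP i 6 (Arith AAdd 5 5 6 K) else K.

Definition profit_prog (n T : nat) (x : solution) : prog -> prog :=
  foreach (seq 0 T) (fun t => foreach (seq 0 n) (add_profit x t)).

Definition keep_better (n T : nat) (x : solution) (Kold Knew : prog) : prog :=
  LoadNat 0 5 (profit_prog n T x (LoadNat 0 7 (Test 5 4 (fun le =>
    if le then Kold else Arith AAdd 4 5 7 Knew)))).

Section ProfitLoop.
Variables (I : instance) (eps : R).

Definition adds (body : prog -> prog) (v : R) (c : nat) : Prop :=
  forall K m, exists m' c', run I eps (body K) m = delay c' (run I eps K m') /\
    m' 5%nat = m 5%nat + v /\ (forall j, j <> 5%nat -> j <> 6%nat -> m' j = m j) /\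
    (c' <= c)%nat.

Lemma foreach_adds {A : Type} (l : list A) body g c :
  (forall a, adds (body a) (g a) c) ->
  adds (foreach l body) (fold_right Rplus 0 (map g l)) (length l * c).
Proof.
  intro Hbody; induction l as [|a l IH]; intros K m; cbn [foreach].
  - exists m, 0%nat; repeat split; cbn; auto; [now destruct run | lra].
  - destruct (Hbody a (foreach l body K) m) as (m1 & c1 & Hrun1 & H5_1 & Hf1 & Hc1).
    destruct (IH K m1) as (m2 & c2 & Hrun2 & H5_2 & Hf2 & Hc2).
    exists m2, (c1 + c2)%nat; repeat split.
    + now rewrite Hrun1, Hrun2, delay_delay.
    + rewrite H5_2, H5_1; cbn; ring.
    + intros j H5 H6; rewrite Hf2, Hf1; auto.
    + cbn [length]; lia.
Qed.

Lemma add_profit_adds x t i : adds (add_profit x t i) (prof I i * b2R (x t i)) 2.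
Proof.
  intros K m; unfold add_profit; destruct (x t i).
  - exists (upd (upd m 6 (prof I i)) 5 (m 5%nat + prof I i)), 2%nat; repeat split.
    + rewrite run_LoadP, run_Arith, delay_delay; cbn [upd Nat.eqb aop_sem]; reflexivity.
    + rewrite upd_same; cbn; ring.
    + intros j H5 H6; now rewrite !upd_other.
    + lia.
  - exists m, 0%nat; repeat split; cbn; auto; [now destruct run | ring].
Qed.

Lemma profit_prog_adds x :
  adds (profit_prog (n_items I) (n_times I) x) (profit I x) (n_times I * (n_items I * 2)).
Proof.
  unfold profit_prog, profit, sumR.
  replace (n_times I * (n_items I * 2))%nat
    with (length (seq 0 (n_times I)) * (length (seq 0 (n_items I)) * 2))%nat
    by now rewrite !length_seq.
  apply foreach_adds; intro t; apply foreach_adds; intro i; apply add_profit_adds.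
Qed.

Lemma keep_better_run x Kold Knew m :
  let better := Rle_dec (profit I x) (m 4%nat) in
  exists m' c,
    run I eps (keep_better (n_items I) (n_times I) x Kold Knew) m =
      delay c (run I eps (if better then Kold else Knew) m') /\
    m' 4%nat = (if better then m 4%nat else profit I x) /\
    (forall j, (8 <= j)%nat -> m' j = m j) /\
    (c <= 2 * (n_items I * n_times I) + 4)%nat.
Proof.
  intro better; unfold keep_better; rewrite run_LoadNat.
  destruct (profit_prog_adds x (LoadNat 0 7 (Test 5 4 (fun le =>
    if le then Kold else Arith AAdd 4 5 7 Knew))) (upd m 5 (INR 0)))
    as (m1 & c1 & Hrun1 & H5 & Hf1 & Hc1).
  rewrite upd_same, Rplus_0_l in H5.
  assert (H4 : m1 4%nat = m 4%nat) by (rewrite Hf1, upd_other; auto).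
  rewrite Hrun1, run_LoadNat, run_Test, !delay_delay; cbn [upd Nat.eqb].
  rewrite H5, H4; fold better; destruct better.
  - exists (upd m1 7 (INR 0)), (1 + c1 + 1 + 1)%nat; repeat split.
    + rewrite upd_other, H4; auto.
    + intros j Hj; rewrite upd_other, Hf1, upd_other; auto; lia.
    + lia.
  - exists (upd (upd m1 7 (INR 0)) 4 (profit I x)), (1 + c1 + 1 + 1 + 1)%nat; repeat split.
    + rewrite run_Arith, delay_delay; cbn [upd Nat.eqb aop_sem].
      rewrite H5; f_equal; f_equal; f_equal; cbn; ring.
    + intros j Hj; rewrite !upd_other, Hf1, upd_other; auto; lia.
    + lia.
Qed.

End ProfitLoop.

Definition guess_reg (n k r : nat) : nat := 8 + (r * n + k).

Lemma guess_reg_inj n k r r' : (k < n)%nat -> guess_reg n k r = guess_reg n k r' -> r = r'.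
Proof. unfold guess_reg; intros Hk Heq; apply (Nat.mul_cancel_r r r' n); lia. Qed.

Lemma guess_reg_disjoint n k k' r r' : (k < n)%nat -> (k' < n)%nat -> k <> k' ->
  guess_reg n k r <> guess_reg n k' r'.
Proof.
  unfold guess_reg; intros Hk Hk' Hkk' Heq.
  destruct (Nat.lt_trichotomy r r') as [Hr|[->|Hr]]; [| lia |].
  - assert (r * n + n <= r' * n)%nat by nia; lia.
  - assert (r' * n + n <= r * n)%nat by nia; lia.
Qed.

Fixpoint try_guesses (A : algo) (n T a j : nat) (best : solution) : prog :=
  match j with
  | O => Halt best
  | S j' => simulate (guess_reg n a) a T (A n T) (fun x =>
      keep_better n T x (try_guesses A n T (S a) j' best) (try_guesses A n T (S a) j' x))
  end.

Definition reduction_algo (A : algo) : algo := fun n T =>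
  match T with
  | O => Halt empty
  | S _ => try_guesses A n T 0 n empty
  end.

Lemma round_cost_le (c_sim c_cmp c_A g : nat) (F : R) :
  (c_sim + g <= 6 * c_A)%nat -> (c_cmp <= 2 * g + 4)%nat -> (1 <= g <= c_A)%nat ->
  INR c_A <= F -> INR (c_sim + c_cmp) <= 11 * F.
Proof.
  intros Hsim Hcmp Hg HF.
  apply Rle_trans with (INR (11 * c_A)); [apply le_INR; lia|].
  rewrite mult_INR; cbn [INR]; lra.
Qed.

Section TryGuesses.
Variables (A : algo) (I : instance) (eps F : R).
Hypothesis V : valid I.
Hypothesis T_pos : (0 < n_times I)%nat.
Local Notation guess k := (fst (exec A (prune I k) eps)).
Hypothesis guess_feasible : forall k, (k < n_items I)%nat -> feasible I (guess k).
Hypothesis guess_cost : forall k, (k < n_items I)%nat -> INR (snd (exec A (prune I k) eps)) <= F.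

Lemma try_guesses_run j : forall a best m,
  (a + j = n_items I)%nat -> feasible I best -> m 4%nat = profit I best ->
  (forall k r, (a <= k < n_items I)%nat -> m (guess_reg (n_items I) k r) = 0) ->
  let o := run I eps (try_guesses A (n_items I) (n_times I) a j best) m in
  feasible I (fst o) /\ profit I best <= profit I (fst o) /\
  (forall k, (a <= k < n_items I)%nat -> profit I (guess k) <= profit I (fst o)) /\
  INR (snd o) <= 11 * INR j * F + INR (n_items I * n_times I).
Proof.
  induction j as [|j IH]; intros a best m Haj Fbest Hbest Hzero o; subst o.
  - rewrite run_Halt; cbn [fst snd INR]; split; [exact Fbest|]; repeat split; [lra | intros; lia | lra].
  - set (n := n_items I) in *; set (T := n_times I) in *; cbn [try_guesses].
    destruct (simulate_run I eps a (guess_reg n a)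
      (fun x => keep_better n T x (try_guesses A n T (S a) j best)
                                  (try_guesses A n T (S a) j x))
      (fun r r' => guess_reg_inj n a r r' ltac:(lia)) ltac:(intro; unfold guess_reg; lia)
      (A n T) m (fun _ => 0) ltac:(intro; apply Hzero; lia)) as (m1 & c1 & Hf1 & Hrun1 & Hc1).
    change (n_times I) with T in Hrun1, Hc1; change (n_items I) with n in Hc1.
    change (fst (run (prune I a) eps (A n T) (fun _ => 0))) with (guess a) in Hrun1.
    rewrite Hrun1.
    destruct (keep_better_run I eps (guess a) (try_guesses A n T (S a) j best)
      (try_guesses A n T (S a) j (guess a)) m1) as (m2 & c2 & Hrun2 & H4 & Hf2 & Hc2).
    change (n_times I) with T in Hrun2, Hc2; change (n_items I) with n in Hrun2, Hc2.
    rewrite Hrun2, delay_delay.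
    assert (Hm1_4 : m1 4%nat = m 4%nat) by (apply Hf1; [lia | intro; unfold guess_reg; lia]).
    set (next := if Rle_dec (profit I (guess a)) (m1 4%nat) then best else guess a).
    destruct (IH (S a) next m2) as (Fo & Hnext & Hguesses & Ho).
    + lia.
    + unfold next; destruct Rle_dec; auto; apply guess_feasible; lia.
    + rewrite H4; unfold next; destruct Rle_dec; congruence.
    + intros k r Hk; rewrite Hf2, Hf1 by (unfold guess_reg; lia || intro; apply guess_reg_disjoint; lia).
      apply Hzero; lia.
    + assert (Hround : INR (c1 + c2) <= 11 * F).
      { apply (round_cost_le c1 c2 (snd (exec A (prune I a) eps)) (n * T)); auto.
        - split; [nia | exact (run_cost_ge (prune I a) eps (A n T) (fun _ => 0))].
        - apply guess_cost; lia. }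
      assert (Hnext_ge : profit I best <= profit I next /\ profit I (guess a) <= profit I next)
        by (unfold next; destruct Rle_dec; lra).
      replace (if Rle_dec (profit I (guess a)) (m1 4%nat) then _ else _)
        with (try_guesses A n T (S a) j next) by (unfold next; now destruct Rle_dec).
      cbn [fst snd delay]; split; [exact Fo|]; repeat split.
      * lra.
      * intros k Hk; destruct (Nat.eq_dec k a) as [->|]; [lra | apply Hguesses; lia].
      * rewrite plus_INR, S_INR; lra.
Qed.

Lemma try_guesses_spec :
  let o := run I eps (try_guesses A (n_items I) (n_times I) 0 (n_items I) empty) (fun _ => 0) in
  feasible I (fst o) /\
  (forall k, (k < n_items I)%nat -> profit I (guess k) <= profit I (fst o)) /\
  INR (snd o) <= 12 * INR (n_items I) * F.
Proof.
  destruct (try_guesses_run (n_items I) 0 empty (fun _ => 0)) as (Fo & _ & Hguesses & Ho);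
    auto using feasible_empty.
  - now rewrite profit_empty.
  - intro o; split; [exact Fo|]; split; [intros k Hk; apply Hguesses; lia|].
    assert (Hgrid : INR (n_items I * n_times I) <= INR (n_items I) * F).
    { destruct (Nat.eq_dec (n_items I) 0) as [E|Hn]; [rewrite E; cbn; lra|].
      assert (Hca : (n_items I * n_times I <= snd (exec A (prune I 0) eps))%nat)
        by exact (run_cost_ge (prune I 0) eps _ _).
      apply le_INR in Hca.
      assert (INR (snd (exec A (prune I 0) eps)) <= F) by (apply guess_cost; lia).
      assert (1 <= INR (n_items I)) by (apply (le_INR 1); lia).
      pose proof (pos_INR (snd (exec A (prune I 0) eps))); nra. }
    unfold o; lra.
Qed.

End TryGuesses.

Theorem mainTheorem2 (f : nat -> nat -> R -> R)
  (f_nonneg : forall n T e, 0 < e -> 0 <= f n T e)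
  (A : algo)
  (HA : forall (I : instance) (eps : R), valid I -> 0 < eps ->
     feasible I (fst (exec A I eps)) /\
     (forall y, feasible I y -> one_in I y ->
        (1 - eps) * profit I y <= profit I (fst (exec A I eps))) /\
     INR (snd (exec A I eps)) <= f (n_items I) (n_times I) eps) :
  exists (c : R) (A' : algo), 0 < c /\
    forall (I : instance) (eps : R), valid I -> 0 < eps ->
     feasible I (fst (exec A' I eps)) /\
     (forall y, feasible I y ->
        (1 - eps) * profit I y <= profit I (fst (exec A' I eps))) /\
     INR (snd (exec A' I eps)) <= c * INR (n_items I) * f (n_items I) (n_times I) eps.
Proof.
  exists 12, (reduction_algo A); split; [lra|]; intros I eps V Heps.
  unfold exec at 1 2 3, reduction_algo.
  destruct (n_times I) as [|T] eqn:ET.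
  - rewrite run_Halt, ET; cbn [fst snd]; split; [now apply feasible_empty|]; split.
    + intros y _; unfold profit; rewrite ET; cbn; lra.
    + specialize (f_nonneg (n_items I) 0%nat eps Heps); rewrite Nat.mul_0_r; cbn.
      pose proof (pos_INR (n_items I)); nra.
  - rewrite <- ET.
    assert (T_pos : (0 < n_times I)%nat) by lia.
    pose proof (fun k (Hk : (k < n_items I)%nat) => HA _ eps (prune_valid I k V T_pos Hk) Heps)
      as Hguess.
    destruct (try_guesses_spec A I eps (f (n_items I) (n_times I) eps) V T_pos)
      as (Fo & Hbest & Ho).
    + intros k Hk; apply (feasible_of_prune I k V T_pos), Hguess, Hk.
    + intros k Hk; apply Hguess, Hk.
    + split; [exact Fo|]; split; [|exact Ho].
      apply (approx_by_best_guess I eps _ (fun k => fst (exec A (prune I k) eps)) V T_pos);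
        [now apply profit_ge0 | | exact Hbest].
      intros k Hk; apply Hguess, Hk.
Qed.
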